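(* Consider the sequence of distributed systems under the RJSQ policy described in the context (origins unknown or known). Assume the systems are initially empty, $\lim_{n\to\infty}\sqrt n(1-\rho_n)=\beta\in\mathbb R$, $\lim\chi_n=0$, $\lim\sqrt n\chi_n=\infty$, $\mathbb E[z(1)^4]+\sum_{k=1}^s\mathbb E[w_k(1)^4]<\infty$, and $\lim_{n\to\infty}\sqrt n\chi_n/\sqrt{\log\log n}=\infty$, and let $C,C'>0$ be constants such that for each $T>0$, almost surely, $\sup_{0\le t\le T}\max_{k,\ell}|\tilde L_{n,k}(t)-\tilde L_{n,\ell}(t)|<\max\{C\chi_n,\,C'(\log\log n+\log(n\chi_n^2))/(\sqrt n\chi_n)\}$ for all large $n$. Then the order of magnitude (in $n$) of the upper bound $\max\{C\chi_n,\,C'(\log\log n+\log(n\chi_n^2))/(\sqrt n\chi_n)\}$ is minimized by choosing $\chi_n=C''n^{-1/4}\sqrt{\log n}$ with $C''>0$; and with this choice, for every $T>0$, with probability 1, \[ \sup_{0\le t\le T}\max_{k,\ell=1,\ldots,s}|\tilde L_{n,k}(t)-\tilde L_{n,\ell}(t)|=O\big(n^{-1/4}\sqrt{\log n}\big). \]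
   Context: Setting (distributed systems under RJSQ). Fix integers $s\ge 2$, $b\ge 1$, and rates $0<\mu_1\le\cdots\le\mu_s$; put $\mu=\sum_{k=1}^s\mu_k$. For each $n\in\mathbb{N}$ there is a system with $s$ stations; each station has one work-conserving server, unlimited waiting room and FCFS discipline. All systems are driven by the following mutually independent primitives: (1) i.i.d. nonnegative $z(1),z(2),\ldots$ with mean $1$ and coefficient of variation $c_0<\infty$; (2) for each $k$, i.i.d. nonnegative $w_k(1),w_k(2),\ldots$ with mean $1$ and coefficient of variation $c_k<\infty$, where $w_k(i)$ is the service requirement of the $i$th customer served at station $k$, whose service time there is $w_k(i)/\mu_k$; (3) i.i.d. random vectors $\boldsymbol\gamma(j)=(\gamma_1(j),\ldots,\gamma_s(j))$ with $\mathbb{P}[\boldsymbol\gamma(j)=\boldsymbol d_m]=p_m>0$ for $m=1,\ldots,b$, where $\boldsymbol d_m=(d_{m,1},\ldots,d_{m,s})\in\mathbb{R}_+^s$ and $\sum_m p_m=1$ (customer $j$ is ''from origin $m$'' if $\boldsymbol\gamma(j)=\boldsymbol d_m$); (4) i.i.d. uniform$(0,1)$ variables $u(1),u(2),\ldots$. In system $n$, with $\lambda_n>0$ and $\rho_n=\lambda_n/\mu$, customer $j$ appears at time $a_n(j)=\sum_{i\le j}z(i)/\lambda_n$; if sent to station $k$ it arrives there at time $a_n(j)+\sqrt{n}\gamma_k(j)$ and stays until its service completes. $Q_{n,k}(t)$ is the number of customers present at station $k$ at time $t$, $L_{n,k}(t)=Q_{n,k}(t)/\mu_k$, $\tilde Q_{n,k}(t)=Q_{n,k}(nt)/\sqrt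 n$, $\tilde L_{n,k}(t)=\tilde Q_{n,k}(t)/\mu_k$. A routing plan is an array $r_{m,k}\in[0,1]$ with $\sum_k r_{m,k}=1$ for each $m$ and $\mu_k=\mu\sum_m p_m r_{m,k}$ for each $k$. RJSQ policy with balancing fraction $\chi_n>0$: when customer $j$ appears, a permutation $(\zeta_{n,1}(j),\ldots,\zeta_{n,s}(j))$ of $\{1,\ldots,s\}$ is chosen with $L_{n,\zeta_{n,1}(j)}(a_n(j)-)\le\cdots\le L_{n,\zeta_{n,s}(j)}(a_n(j)-)$ (ties broken by an arbitrary rule), and $\pi_{n,k}(j)=\ell$ iff $\zeta_{n,\ell}(j)=k$. Perturbation coefficients $\varepsilon_{n,1},\ldots,\varepsilon_{n,s}$ satisfy $\sum_\ell\varepsilon_{n,\ell}=0$, $\varepsilon_{n,1}=\chi_n$, $\varepsilon_{n,\ell}<0$ for $\ell\ge2$, $0\le\mu_k/\mu+\varepsilon_{n,\ell}\le1$ for all $k,\ell$, and there is $\delta_0>0$ with $\varepsilon_{n,\ell}\le-\delta_0\chi_n$ for all $\ell\ge2$ and $n$. If origins are unknown, customer $j$ is sent to station $k$ iff $\kappa_{n,k-1}(j)\le u(j)<\kappa_{n,k}(j)$, where $\kappa_{n,0}(j)=0$ and $\kappa_{n,k}(j)=\sum_{\ell\le k}(\mu_\ell/\mu+\varepsilon_{n,\pi_{n,\ell}(j)})$ (the routing plan is then $r_{m,k}=\mu_k/\mu$). If origins are known, a routing plan $r$ is fixed and coefficients $\varepsilon^m_{n,\ell}(j)$ ($m\le b$,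 $\ell\le s$, $j\in\mathbb N$), determined by $(\pi_{n,1}(j),\ldots,\pi_{n,s}(j))$, satisfy $\sum_\ell\varepsilon^m_{n,\ell}(j)=0$, $\sum_m p_m\varepsilon^m_{n,\ell}(j)=\varepsilon_{n,\ell}$, $\varepsilon^m_{n,1}(j)\ge0$, $\varepsilon^m_{n,\ell}(j)\le0$ for $\ell\ge2$, and $0\le r_{m,k}+\varepsilon^m_{n,\pi_{n,k}(j)}(j)\le1$; a customer $j$ from origin $m$ is sent to station $k$ iff $\kappa^m_{n,k-1}(j)\le u(j)<\kappa^m_{n,k}(j)$, where $\kappa^m_{n,0}(j)=0$, $\kappa^m_{n,k}(j)=\sum_{\ell\le k}(r_{m,\ell}+\varepsilon^m_{n,\pi_{n,\ell}(j)}(j))$. ''Initially empty'' means no customers are present at time $0$. *)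

From HB Require Import structures.
From mathcomp Require Import all_boot all_order all_algebra perm.
From mathcomp Require Import all_classical all_reals all_analysis.
Set Implicit Arguments. Unset Strict Implicit. Unset Printing Implicit Defensive.
Import Order.TTheory GRing.Theory Num.Theory.
Import numFieldNormedType.Exports.
Local Open Scope classical_set_scope.
Local Open Scope ring_scope.

(* Index set of all primitives:
   inl (inl (inl i))   = z(i)
   inl (inl (inr (k,i))) = w_k(i)
   inl (inr j)         = origin of customer j  (gamma(j))
   inr j               = u(j)                                   *)
Definition prim_idx (s : nat) := (nat + ('I_s * nat) + nat + nat)%type.

Section Prob.
Variables (R : realType) (d : measure_display) (Omega : measurableType d).
Variable (P : probability Omega R).

Definition gen_real (X : Omega -> R) : set (set Omega) :=
  [set X @^-1` A | A in [set A : set R | measurable A]].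
Definition gen_fin (T : finType) (X : Omega -> T) : set (set Omega) :=
  [set X @^-1` A | A in [set: set T]].

Definition mutually_independent (I : eqType) (F : I -> set (set Omega)) :=
  forall (J : seq I) (E : I -> set Omega), uniq J ->
    (forall i, i \in J -> F i (E i)) ->
    P (\big[setI/setT]_(i <- J) E i) = (\prod_(i <- J) P (E i))%E.

Definition same_law (X Y : Omega -> R) :=
  forall A : set R, measurable A -> P (X @^-1` A) = P (Y @^-1` A).

Definition uniform01 (X : Omega -> R) :=
  forall x : R, P [set o | X o <= x] = (Num.min (Num.max x 0) 1)%:E.
End Prob.

Section System.
Variable R : realType.

(* Sample-path description of system n under RJSQ (origins known; the
   origins-unknown policy is the special case r m k = mu_k/mu and
   epsm sigma m l = eps l).  Customers and service ranks are 0-based.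
   sqn = sqrt n; a j = appearance time of customer j; org j = its origin;
   u j = its uniform variable; w k i = service requirement of the i-th
   (0-based) customer served at station k; dl m k = delay coordinate
   d_{m,k}; r = routing plan; epsm sigma m l = epsilon^m_{n,l} when the
   permutation (pi_{n,1},...,pi_{n,s}) equals sigma (ranks 0-based).
   Outputs: dest j = station to which j is sent, pi j = ranks of the
   stations (pi j k = l iff station k is (l+1)-th shortest), rank j =
   position of j in the FCFS service order of its station, dep j =
   departure time, Q k t = number of customers at station k at time t. *)
Definition rjsq_path (s b : nat) (mu : 'I_s -> R) (dl : 'I_b -> 'I_s -> R)
  (r : 'I_b -> 'I_s -> R) (epsm : {perm 'I_s} -> 'I_b -> 'I_s -> R)
  (sqn : R) (a : nat -> R) (org : nat -> 'I_b) (u : nat -> R)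
  (w : 'I_s -> nat -> R)
  (dest : nat -> 'I_s) (pi : nat -> {perm 'I_s}) (rank : nat -> nat)
  (dep : nat -> R) (Q : 'I_s -> R -> nat) : Prop :=
  let arr j := a j + sqn * dl (org j) (dest j) in
  [/\
   forall k t N, (forall j, (N <= j)%N -> t < a j) ->
     Q k t = (\sum_(j < N) ((dest j == k) && (arr j <= t)%R && (t < dep j)%R : nat))%N,
   (* RJSQ ordering of stations by L_k(a_j -) = lim_{x -> a_j-} Q_k(x)/mu_k *)
   forall j k k' l l',
     ((Q k x)%:R / mu k) @[x --> (a j)^'-] --> l ->
     ((Q k' x)%:R / mu k') @[x --> (a j)^'-] --> l' ->
     (pi j k <= pi j k')%N -> l <= l',
   (* randomized routing: kappa_{k-1} <= u < kappa_k for k = dest j *)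
   forall j, let c l := r (org j) l + epsm (pi j) (org j) (pi j l) in
     (\sum_(l < s | (l < dest j)%N) c l) <= u j /\
     u j < \sum_(l < s | (l <= dest j)%N) c l,
   [/\ forall j j', dest j = dest j' -> arr j < arr j' -> (rank j < rank j')%N,
       forall j j', dest j = dest j' -> rank j = rank j' -> j = j' &
       forall j i, (i < rank j)%N -> exists j', dest j' = dest j /\ rank j' = i] &
   forall j, let k := dest j in
     (rank j = 0%N -> dep j = arr j + w k 0%N / mu k) /\
     (forall j', dest j' = k -> rank j = (rank j').+1 ->
        dep j = Num.max (arr j) (dep j') + w k (rank j) / mu k)].

Definition Ltilde (s : nat) (mu : 'I_s -> R) (Qn : 'I_s -> R -> nat)
    (n : nat) (k : 'I_s) (t : R) : R :=
  (Qn k (n%:R * t))%:R / (Num.sqrt n%:R * mu k).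

Definition imbalance (s : nat) (mu : 'I_s -> R) (Qn : 'I_s -> R -> nat)
    (n : nat) (T : R) : \bar R :=
  ereal_sup [set (\big[Num.max/0]_(k < s) \big[Num.max/0]_(l < s)
                  `|Ltilde mu Qn n k t - Ltilde mu Qn n l t|)%:E
            | t in `[0, T]].

Definition bound (C C' : R) (chi : R) (n : nat) : R :=
  Num.max (C * chi)
    (C' * (ln (ln n%:R) + ln (n%:R * chi ^+ 2)) / (Num.sqrt n%:R * chi)).

Definition rate (n : nat) : R := (n%:R `^ (- 4^-1)) * Num.sqrt (ln n%:R).
End System.

From HB Require Import structures.
From mathcomp Require Import all_boot all_order all_algebra perm.
From mathcomp Require Import all_classical all_reals all_analysis.
From mathcomp Require Import ring lra.
Import Order.TTheory GRing.Theory Num.Theory.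
Import numFieldNormedType.Exports.
Local Open Scope classical_set_scope.
Local Open Scope ring_scope.

(* Write r_n := n^{-1/4} sqrt(log n); everything rests on sqrt n * r_n^2 = log n.
   With chi_n = c r_n the first term of the bound is C c r_n, and the second is
   at most 2 C' log n / (c sqrt n r_n) = (2 C' / c) r_n.  Conversely, for any
   admissible chi', either chi'_n >= r_n, and the first term is at least C r_n,
   or h := sqrt n chi'_n < H := sqrt n r_n; the second term
   C' (log log n + 2 log h) / h decreases in h >= e, so it is at least its value
   at H, and 2 log H = log n / 2 + log log n makes that at least (C' / 2) r_n.
   Part (ii) is the assumed almost-sure bound combined with the first estimate. *)

Section RateAsymptotics.
Variable R : realType.

Lemma ln_le_subr1 {x : R} : 0 < x -> ln x <= x - 1.
Proof.
move=> x0; have := @le_ln1Dx R (x - 1).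
by rewrite addrCA subrr addr0; apply; lra.
Qed.

Lemma ln_ge1 {x : R} : expR 1 <= x -> 1 <= ln x.
Proof.
move=> hx; have x0 : 0 < x by rewrite (lt_le_trans _ hx) ?expR_gt0.
by rewrite -[X in X <= _](expRK 1) ler_ln // posrE expR_gt0.
Qed.

Lemma sqrt_mul_rate_sqr (n : nat) : (0 < n)%N ->
  Num.sqrt n%:R * rate R n ^+ 2 = ln n%:R.
Proof.
move=> n0; have N0 : 0 < n%:R :> R by rewrite ltr0n.
have lnN0 : 0 <= ln n%:R :> R by rewrite ln_ge0 // ler1n.
rewrite /rate exprMn sqr_sqrtr // -powR_mulrn ?powR_ge0 // -powRrM.
rewrite -powR12_sqrt ?ltW // mulrA -powRD ?(gt_eqF N0) ?implybT //.
by rewrite [X in _ `^ X](_ : _ = 0) ?powRr0 ?mul1r //; field.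
Qed.

Lemma rate_gt0 {n : nat} : expR 1 <= (n%:R : R) -> 0 < rate R n.
Proof.
move=> hn; rewrite /rate mulr_gt0 ?powR_gt0 ?sqrtr_gt0 //.
  by rewrite (lt_le_trans _ hn) ?expR_gt0.
by rewrite (lt_le_trans _ (ln_ge1 hn)) ?ltr01.
Qed.

Lemma lnD_div_antitone {a h H : R} : 0 <= a -> expR 1 <= h -> h <= H ->
  (a + 2 * ln H) / H <= (a + 2 * ln h) / h.
Proof.
move=> a0 eh hH.
have h0 : 0 < h by rewrite (lt_le_trans _ eh) ?expR_gt0.
have H0 : 0 < H by lra.
have lh := ln_ge1 eh.
have lnHh : h * (ln H - ln h) <= H - h.
  have : h * (ln H - ln h) <= h * (H / h - 1).
    by rewrite ler_pM2l // -ln_div ?posrE // ln_le_subr1 ?divr_gt0.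
  by rewrite [in X in _ <= X]mulrBr mulr1 mulrCA divff ?gt_eqF // mulr1.
rewrite ler_pdivrMr // mulrAC ler_pdivlMr //.
nra.
Qed.

Lemma bound_le_rate (C C' c : R) (n : nat) : 0 < C -> 0 < C' -> 0 < c ->
  expR 1 <= (n%:R : R) -> c * rate R n <= 1 ->
  bound C C' (c * rate R n) n <= (C * c + 2 * C' / c) * rate R n.
Proof.
move=> C0 C'0 c0 hN x1.
have N0 : 0 < n%:R :> R by rewrite (lt_le_trans _ hN) ?expR_gt0.
have n0 : (0 < n)%N by rewrite -(ltr0n R).
have r0 := rate_gt0 hN; have l1 := ln_ge1 hN.
set l := ln n%:R in l1 *; set x := c * rate R n in x1 *.
have x0 : 0 < x by rewrite mulr_gt0.
rewrite /bound ge_max; apply/andP; split.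
  by rewrite /x mulrA ler_pM2r // lerDl divr_ge0 ?mulr_ge0 // ltW.
have lnl : ln l <= l by rewrite (le_trans (ln_le_subr1 _)) ?gerBl //; lra.
have lnNx : ln (n%:R * x ^+ 2) <= l.
  rewrite ler_ln ?posrE ?(mulr_gt0 N0) ?exprn_gt0 // ger_pMr //.
  by rewrite expr_le1 // ltW.
rewrite ler_pdivrMr; last by rewrite mulr_gt0 ?sqrtr_gt0.
have -> : (C * c + 2 * C' / c) * rate R n * (Num.sqrt n%:R * x)
    = (C * c ^+ 2 + 2 * C') * l.
  by rewrite /l -sqrt_mul_rate_sqr // /x; field; rewrite gt_eqF.
have : 0 <= C * c ^+ 2 * l by rewrite !mulr_ge0 ?ltW //; lra.
nra.
Qed.

Lemma rate_le_bound (C C' x : R) (n : nat) : 0 < C -> 0 < C' -> 0 < x ->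
  expR 1 <= (n%:R : R) -> expR 1 <= Num.sqrt n%:R * x ->
  Num.min C (C' / 2) * rate R n <= bound C C' x n.
Proof.
move=> C0 C'0 x0 hN hh.
have N0 : 0 < n%:R :> R by rewrite (lt_le_trans _ hN) ?expR_gt0.
have n0 : (0 < n)%N by rewrite -(ltr0n R).
have r0 := rate_gt0 hN; have l1 := ln_ge1 hN.
set l := ln n%:R in l1 *.
rewrite /bound le_max; have [xr|xr] := leP (rate R n) x.
  apply/orP; left; apply: (@le_trans _ _ (C * rate R n)).
    by rewrite ler_pM2r // ge_min lexx.
  by rewrite ler_pM2l.
apply/orP; right.
set h := Num.sqrt n%:R * x in hh *; set H := Num.sqrt n%:R * rate R n.
have h0 : 0 < h by rewrite (lt_le_trans _ hh) ?expR_gt0.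
have H0 : 0 < H by rewrite mulr_gt0 ?sqrtr_gt0.
have hH : h <= H by rewrite ler_pM2l ?sqrtr_gt0 // ltW.
have lnl0 : 0 <= ln l by rewrite ln_ge0.
have lnH : l / 2 <= ln l + 2 * ln H.
  have lnsqrt : 2 * ln (Num.sqrt n%:R) = l.
    by rewrite mulr_natl -lnXn ?sqrtr_gt0 // sqr_sqrtr // ltW.
  have -> : 2 * ln H = ln (Num.sqrt n%:R) + ln l.
    rewrite mulr_natl -lnXn // /H exprMn [Num.sqrt _ ^+ 2]expr2 -mulrA.
    by rewrite sqrt_mul_rate_sqr // lnM ?posrE ?sqrtr_gt0 // (lt_le_trans ltr01).
  lra.
have -> : n%:R * x ^+ 2 = h ^+ 2 by rewrite /h exprMn sqr_sqrtr // ltW.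
rewrite lnXn // -[ln h *+ 2]mulr_natl.
apply: (@le_trans _ _ (C' / 2 * rate R n)).
  by rewrite ler_pM2r // ge_min lexx orbT.
have -> : C' / 2 * rate R n = C' * (l / 2) / H.
  by rewrite /l -sqrt_mul_rate_sqr // /H; field; rewrite !gt_eqF ?sqrtr_gt0.
rewrite -!mulrA ler_pM2l // mulrA (le_trans _ (lnD_div_antitone lnl0 hh hH)) //.
by rewrite ler_pM2r ?invr_gt0.
Qed.

Lemma bound_le_rate_near (C C' c : R) (chi : nat -> R) :
  0 < C -> 0 < C' -> 0 < c ->
  (forall n, (2 <= n)%N -> chi n = c * rate R n) -> chi @ \oo --> 0 ->
  \forall n \near \oo, bound C C' (chi n) n <= (C * c + 2 * C' / c) * rate R n.
Proof.
move=> C0 C'0 c0 chiE chi0; near=> n.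
have hN : expR 1 <= (n%:R : R) by near: n; exact: nbhs_infty_ger.
have n2 : (2 <= n)%N by near: n; exact: nbhs_infty_ge.
have chi1 : chi n < 1 by near: n; apply: cvgr_lt chi0 _ _; exact: ltr01.
by rewrite chiE // in chi1 *; apply: bound_le_rate => //; exact: ltW.
Unshelve. all: end_near.
Qed.

Lemma rate_le_bound_near (C C' : R) (chi : nat -> R) :
  0 < C -> 0 < C' -> (forall n, 0 < chi n) ->
  (fun n : nat => Num.sqrt n%:R * chi n) @ \oo --> +oo ->
  \forall n \near \oo, Num.min C (C' / 2) * rate R n <= bound C C' (chi n) n.
Proof.
move=> C0 C'0 chi_gt0 chi_oo; near=> n.
apply: rate_le_bound => //; near: n; first exact: nbhs_infty_ger.
exact: cvgry_ge chi_oo _.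
Unshelve. all: end_near.
Qed.

End RateAsymptotics.

Theorem corollary1
  (R : realType) (d : measure_display) (Omega : measurableType d)
  (P : probability Omega R)
  (s b : nat) (hs : (2 <= s)%N) (hb : (1 <= b)%N)
  (mu : 'I_s -> R) (hmu_pos : forall k, 0 < mu k)
  (hmu_mono : forall k k' : 'I_s, (k <= k')%N -> mu k <= mu k')
  (* primitives *)
  (z : nat -> {RV P >-> R}) (w : 'I_s -> nat -> {RV P >-> R})
  (org : nat -> Omega -> 'I_b) (u : nat -> {RV P >-> R})
  (p : 'I_b -> R) (dl : 'I_b -> 'I_s -> R)
  (hz_nonneg : forall i o, 0 <= z i o)
  (hz_law : forall i, same_law P (z i) (z 0%N))
  (hz_mean : ('E_P[z 0%N] = 1)%E)
  (hz_var : P.-integrable setT (fun o => ((z 0%N o) ^+ 2)%:E))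
  (hw_nonneg : forall k i o, 0 <= w k i o)
  (hw_law : forall k i, same_law P (w k i) (w k 0%N))
  (hw_mean : forall k, ('E_P[w k 0%N] = 1)%E)
  (hw_var : forall k, P.-integrable setT (fun o => ((w k 0%N o) ^+ 2)%:E))
  (hp_pos : forall m, 0 < p m) (hp_sum : \sum_(m < b) p m = 1)
  (hdl : forall m k, 0 <= dl m k)
  (horg_meas : forall j m, measurable (org j @^-1` [set m]))
  (horg_law : forall j m, P (org j @^-1` [set m]) = (p m)%:E)
  (hu_law : forall j, uniform01 P (u j))
  (hindep : mutually_independent P
     (fun i : prim_idx s => match i with
       | inl (inl (inl i)) => gen_real (z i)
       | inl (inl (inr (k, i))) => gen_real (w k i)
       | inl (inr j) => gen_fin (org j)
       | inr j => gen_real (u j) end))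
  (* arrival rates and heavy traffic *)
  (lam : nat -> R) (hlam : forall n, 0 < lam n) (beta : R)
  (hbeta : (fun n : nat => Num.sqrt n%:R * (1 - lam n / \sum_(k < s) mu k))
             @ \oo --> beta)
  (* routing plan *)
  (r : 'I_b -> 'I_s -> R) (hr01 : forall m k, 0 <= r m k <= 1)
  (hr_sum : forall m, \sum_(k < s) r m k = 1)
  (hr_plan : forall k, mu k = (\sum_(k' < s) mu k') * \sum_(m < b) p m * r m k)
  (* balancing fraction, chosen as C'' n^{-1/4} sqrt(log n) *)
  (chi : nat -> R) (hchi_pos : forall n, 0 < chi n)
  (Cpp : R) (hCpp : 0 < Cpp)
  (hchi_choice : forall n, (2 <= n)%N -> chi n = Cpp * rate R n)
  (hchi0 : chi @ \oo --> 0)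
  (hchi1 : (fun n : nat => Num.sqrt n%:R * chi n) @ \oo --> +oo)
  (hchi2 : (fun n : nat => Num.sqrt n%:R * chi n / Num.sqrt (ln (ln n%:R)))
             @ \oo --> +oo)
  (* perturbation coefficients *)
  (eps : nat -> 'I_s -> R) (delta0 : R) (hdelta0 : 0 < delta0)
  (heps_sum : forall n, \sum_(l < s) eps n l = 0)
  (heps_first : forall n (l : 'I_s), val l = 0%N -> eps n l = chi n)
  (heps_neg : forall n (l : 'I_s), (0 < val l)%N -> eps n l < 0)
  (heps_delta : forall n (l : 'I_s), (0 < val l)%N -> eps n l <= - delta0 * chi n)
  (heps_01 : forall n k l, 0 <= mu k / \sum_(k' < s) mu k' + eps n l <= 1)
  (epsm : nat -> {perm 'I_s} -> 'I_b -> 'I_s -> R)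
  (hepsm_sum : forall n sg m, \sum_(l < s) epsm n sg m l = 0)
  (hepsm_avg : forall n sg l, \sum_(m < b) p m * epsm n sg m l = eps n l)
  (hepsm_first : forall n sg m (l : 'I_s), val l = 0%N -> 0 <= epsm n sg m l)
  (hepsm_rest : forall n sg m (l : 'I_s), (0 < val l)%N -> epsm n sg m l <= 0)
  (hepsm_01 : forall n sg m k, 0 <= r m k + epsm n sg m (sg k) <= 1)
  (* fourth moments *)
  (hz4 : P.-integrable setT (fun o => ((z 0%N o) ^+ 4)%:E))
  (hw4 : forall k, P.-integrable setT (fun o => ((w k 0%N o) ^+ 4)%:E))
  (* the queue-length processes of the (initially empty) systems *)
  (Q : nat -> 'I_s -> R -> Omega -> nat)
  (hQ : {ae P, forall o, forall n : nat,
          exists dest pi rank dep,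
            rjsq_path mu dl r (epsm n) (Num.sqrt n%:R)
              (fun j => (\sum_(i < j.+1) z i o) / lam n)
              (fun j => org j o) (fun j => u j o) (fun k i => w k i o)
              dest pi rank dep (fun k t => Q n k t o)})
  (* the assumed bound with constants C, C' *)
  (C C' : R) (hC : 0 < C) (hC' : 0 < C')
  (hbound : forall T : R, 0 < T ->
     {ae P, forall o, \forall n \near \oo,
        (imbalance mu (fun k t => Q n k t o) n T
           < (bound C C' (chi n) n)%:E)%E}) :
  (* (i) this choice of chi minimizes the order of magnitude of the bound *)
  (forall chi' : nat -> R, (forall n, 0 < chi' n) ->
     chi' @ \oo --> 0 ->
     (fun n : nat => Num.sqrt n%:R * chi' n) @ \oo --> +oo ->
     (fun n : nat => Num.sqrt n%:R * chi' n / Num.sqrt (ln (ln n%:R)))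
       @ \oo --> +oo ->
     exists K : R, 0 < K /\
       \forall n \near \oo, bound C C' (chi n) n <= K * bound C C' (chi' n) n)
  /\
  (* (ii) the imbalance is O(n^{-1/4} sqrt(log n)) almost surely *)
  (forall T : R, 0 < T ->
     {ae P, forall o, exists K : R, \forall n \near \oo,
        (imbalance mu (fun k t => Q n k t o) n T <= (K * rate R n)%:E)%E}).
Proof.
set K := C * Cpp + 2 * C' / Cpp.
have K_gt0 : 0 < K by rewrite addr_gt0 ?mulr_gt0 ?invr_gt0.
have chi_bound : \forall n \near \oo, bound C C' (chi n) n <= K * rate R n.
  exact: bound_le_rate_near.
split.
  move=> chi' chi'_gt0 _ chi'_oo _.
  set e := Num.min C (C' / 2).
  have e_gt0 : 0 < e by rewrite lt_min hC divr_gt0.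
  exists (K / e); split; first exact: divr_gt0.
  near=> n; apply: le_trans (_ : K * rate R n <= _); first by near: n.
  rewrite -{1}(divfK (lt0r_neq0 e_gt0) K) -[K / e * e * _]mulrA ler_pM2l ?divr_gt0 //.
  by near: n; exact: rate_le_bound_near.
move=> T T_gt0; apply: filterS (hbound T T_gt0) => o imbalance_lt.
exists K; near=> n.
apply: (le_trans (ltW (_ : (_ < (bound C C' (chi n) n)%:E)%E))).
  by near: n; exact: imbalance_lt.
by rewrite lee_fin; near: n.
Unshelve. all: end_near.
Qed.
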